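(* Let $(X,e,\mu)$ be an $\mathrm{NP}_2$-digital H-space with $X$ $\mathrm{NP}_2$-irreducible. Then $\{e\}$ is a connected component of $X$, so $X=\{e\}\sqcup Z$ with $Z=X\setminus\{e\}$, and there exist an $\mathrm{NP}_2$-continuous map $\tau:Z\times Z\to Z$ and a subset $A\subseteq Z\times Z$ which is a union of connected components of $Z\times Z$ (with the $\mathrm{NP}_2$ adjacency) such that for all $x,y\in X$: $\mu(x,y)=\tau(x,y)$ if $(x,y)\in A$; $\mu(x,y)=x$ if $y=e$; $\mu(x,y)=y$ if $x=e$; and $\mu(x,y)=e$ otherwise. In particular $e$ is a two-sided unit for $\mu$.
   Context: A digital image is a finite set with a reflexive symmetric adjacency relation (a finite reflexive graph); continuous maps send adjacent points to adjacent points. On products, $\mathrm{NP}_2$ declares two tuples adjacent iff coordinates are adjacent in at most 2 positions and equal elsewhere. An $\mathrm{NP}_2$-homotopy from $f$ to $g:X\to Y$ is an $\mathrm{NP}_2$-continuous $H:X\times[0,m]_{\mathbb{Z}}\to Y$ with $H(\cdot,0)=f$, $H(\cdot,m)=g$; write $f\simeq_2 g$. $X$ is $\mathrm{NP}_2$-irreducible if it is not $\mathrm{NP}_2$-homotopy equivalent to a digital image with fewer points. An $\mathrm{NP}_2$-digital H-space is $(X,e,\mu)$ with $\mu:X\times X\to X$ $\mathrm{NP}_2$-continuous, $\mu\circ(\mathrm{id}_X,c_e)\simeq_2\mathrm{id}_X$, $\mu\circ(c_e,\mathrm{id}_X)\simeq_2\mathrm{id}_X$, where $(f,g)(x)=(f(x),g(x))$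 and $c_e$ is constant at $e$ (homotopies need not be pointed). *)

From mathcomp Require Import all_boot.
Set Implicit Arguments. Unset Strict Implicit. Unset Printing Implicit Defensive.

Record dimage := DImage {
  dcar :> finType;
  dadj : rel dcar;
  dadj_refl : reflexive dadj;
  dadj_sym : symmetric dadj }.

Definition dcontinuous (A B : Type) (adjA : rel A) (adjB : rel B) (f : A -> B) :=
  forall a a', adjA a a' -> adjB (f a) (f a').

(* NP_2 adjacency on a product of two factors: the two tuples are adjacent in
   at most 2 coordinates and equal elsewhere.  With exactly two factors (and
   reflexive adjacencies) this is: each coordinate is equal-or-adjacent,
   i.e. adjacent, in both coordinates. *)
Definition np2 (A B : Type) (adjA : rel A) (adjB : rel B) : rel (A * B) :=
  fun p q => adjA p.1 q.1 && adjB p.2 q.2.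

(* The digital interval [0,m]_Z, represented by 'I_m.+1, with c_1 adjacency. *)
Definition iadj (m : nat) : rel 'I_m.+1 :=
  fun i j => (i <= j.+1) && (j <= i.+1).

Definition np2_homotopic (X Y : dimage) (f g : X -> Y) :=
  exists m : nat, exists H : X * 'I_m.+1 -> Y,
    dcontinuous (np2 (@dadj X) (@iadj m)) (@dadj Y) H /\
    (forall x, H (x, ord0) = f x) /\ (forall x, H (x, ord_max) = g x).

Definition np2_htpy_equiv (X Y : dimage) :=
  exists (f : X -> Y) (g : Y -> X),
    dcontinuous (@dadj X) (@dadj Y) f /\ dcontinuous (@dadj Y) (@dadj X) g /\
    np2_homotopic (fun x => g (f x)) id /\ np2_homotopic (fun y => f (g y)) id.

Definition np2_irreducible (X : dimage) :=
  ~ exists Y : dimage, #|Y| < #|X| /\ np2_htpy_equiv X Y.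

Definition np2_Hspace (X : dimage) (e : X) (mu : X * X -> X) :=
  dcontinuous (np2 (@dadj X) (@dadj X)) (@dadj X) mu /\
  np2_homotopic (fun x => mu (x, e)) id /\
  np2_homotopic (fun x => mu (e, x)) id.

Definition Zt (X : dimage) (e : X) := {x : X | x != e}.
Definition zadj (X : dimage) (e : X) : rel (Zt e) :=
  fun a b => dadj (val a) (val b).

From mathcomp Require Import all_boot zify.

Set Implicit Arguments.
Unset Strict Implicit.
Unset Printing Implicit Defensive.

(* If every neighbour of [x] is adjacent to [y <> x], then collapsing [x] onto
   [y] is a homotopy equivalence with [X] minus [x], which an irreducible image
   forbids.  A homotopy to the identity is therefore stationary: each stage is
   pointwise dominated by the next one, hence equal to it, so the unit laws of
   an H-space hold on the nose.  If [y] is adjacent to [e], continuity of [mu]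
   makes [mu (y, a)] adjacent to every neighbour of [a], so [mu (y, -) = id] and
   [y = mu (y, e) = e].  Thus the unit is an isolated point, [mu^-1 e] is a union of components of [X * X], and on the
   remaining components [mu] lands in [X \ {e}]. *)

Definition dominates (X : dimage) (y x : X) := forall b, dadj x b -> dadj y b.

Section DeletePoint.
Variables (X : dimage) (x : X).

Definition del_adj : rel {y : X | y != x} := fun a b => dadj (val a) (val b).
Lemma del_adj_refl : reflexive del_adj. Proof. by move=> a; apply: dadj_refl. Qed.
Lemma del_adj_sym : symmetric del_adj. Proof. by move=> a b; apply: dadj_sym. Qed.
Definition delete_point := DImage del_adj_refl del_adj_sym.

Lemma card_delete_point : #|delete_point| < #|X|.
Proof.
rewrite /= card_sig.
have -> : #|[pred y | y != x]| = #|predC1 x| by apply: eq_card.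
have /card_gt0P : exists y : X, y \in X by exists x.
by rewrite cardC1; case: #|X|.
Qed.

End DeletePoint.

Lemma np2_homotopic_adjacent (X Y : dimage) (f g : X -> Y) :
  dcontinuous (@dadj X) (@dadj Y) f -> dcontinuous (@dadj X) (@dadj Y) g ->
  (forall a b, dadj a b -> dadj (f a) (g b)) -> np2_homotopic f g.
Proof.
move=> fc gc fg; exists 1, (fun p => if p.2 == ord0 then f p.1 else g p.1).
split=> // [[a s] [b t] /andP /= [ab _]].
case: (s == ord0); case: (t == ord0); [exact: fc | exact: fg | | exact: gc].
by rewrite dadj_sym; apply: fg; rewrite dadj_sym.
Qed.

Lemma irreducible_dominates (X : dimage) (x y : X) :
  np2_irreducible X -> dominates y x -> y = x.
Proof.
move=> irr dom; apply/eqP/negPn/negP => yx; apply: irr.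
exists (delete_point x); split; first exact: card_delete_point.
pose r z := if z == x then y else z.
have r_ne z : r z != x by rewrite /r; case: ifP => [_|/negbT //].
have r_adj a b : dadj a b -> dadj (r a) b by rewrite /r; case: eqP => [->|//]; apply: dom.
have r_cont : dcontinuous (@dadj X) (@dadj X) r.
  move=> a b ab; rewrite {2}/r; case: eqP => [eb|_]; last exact: r_adj.
  rewrite /r; case: eqP => [_|_]; first exact: dadj_refl.
  by rewrite dadj_sym; apply: dom; rewrite -eb dadj_sym.
pose i z : delete_point x := exist _ (r z) (r_ne z).
have i_cont : dcontinuous (@dadj X) (@dadj (delete_point x)) i by [].
have val_cont : dcontinuous (@dadj (delete_point x)) (@dadj X) val by [].
exists i, val; split=> //; split=> //; split.
  by apply: np2_homotopic_adjacent => // a b /r_adj.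
have i_val a : i (val a) = a by apply: val_inj; rewrite /= /r (negbTE (valP a)).
by apply: np2_homotopic_adjacent => // a b; rewrite /= !i_val.
Qed.

Lemma irreducible_dominated_id (X : dimage) (f : X -> X) :
  np2_irreducible X -> (forall a b, dadj a b -> dadj (f a) b) -> f =1 id.
Proof. by move=> irr fa a; apply: irreducible_dominates irr _ => b /fa. Qed.

Lemma irreducible_homotopic_id (X : dimage) (f : X -> X) :
  np2_irreducible X -> np2_homotopic f id -> f =1 id.
Proof.
move=> irr [m [H [Hc [H0 Hm]]]].
have stage k : k <= m -> H \o pair^~ (inord (m - k)) =1 id.
  elim: k => [_ a|k IH km] /=.
    by rewrite subn0 -{2}(Hm a); congr H; congr pair; apply: val_inj; rewrite /= inordK.
  apply: (irreducible_dominated_id irr) => a b ab.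
  rewrite -{1}(IH (ltnW km) b); apply: Hc; rewrite /np2 /= ab /iadj.
  by rewrite !inordK ?ltnS ?leq_subr //; lia.
move=> a; rewrite -H0 -{2}(stage m (leqnn m) a) subnn /=; congr H; congr pair.
by apply: val_inj; rewrite /= inordK.
Qed.

Lemma isolated_connect (X : dimage) (e y : X) :
  (forall z, dadj e z -> z = e) -> connect (@dadj X) e y -> y = e.
Proof.
move=> iso /connectP [p pth ->] {y}.
elim: p e iso pth => [//|z p IH] x iso /= /andP [xz pz].
by move: pz; rewrite (iso _ xz); apply: IH.
Qed.

Lemma isolated_fiber_closed (T : Type) (adjT : rel T) (X : dimage) (e : X)
    (f : T -> X) :
  (forall z, dadj e z -> z = e) -> dcontinuous adjT (@dadj X) f ->
  forall s t, adjT s t -> (f s == e) = (f t == e).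
Proof.
move=> iso fc s t /fc st; apply/eqP/eqP => fe; apply: iso; rewrite -fe //.
by rewrite dadj_sym.
Qed.

Section IrreducibleHspace.
Variables (X : dimage) (e : X) (mu : X * X -> X).
Hypotheses (Hmu : np2_Hspace e mu) (irr : np2_irreducible X).

Lemma Hspace_unitr x : mu (x, e) = x.
Proof. by case: Hmu => _ [/(irreducible_homotopic_id irr)]. Qed.

Lemma Hspace_unitl x : mu (e, x) = x.
Proof. by case: Hmu => _ [_ /(irreducible_homotopic_id irr)]. Qed.

Lemma Hspace_unit_isolated y : dadj e y -> y = e.
Proof.
move=> ey; have [mu_cont _] := Hmu.
have mu_y : (fun z => mu (y, z)) =1 id.
  apply: (irreducible_dominated_id irr) => a b ab.
  by rewrite -(Hspace_unitl b); apply: mu_cont; rewrite /np2 /= ab dadj_sym ey.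
by rewrite -(Hspace_unitr y) mu_y.
Qed.

End IrreducibleHspace.

Theorem mainTheorem16 (X : dimage) (e : X) (mu : X * X -> X) :
  np2_Hspace e mu -> np2_irreducible X ->
  [set y | connect (@dadj X) e y] = [set e] /\
  exists (tau : Zt e * Zt e -> Zt e) (A : {set Zt e * Zt e}),
    dcontinuous (np2 (@zadj X e) (@zadj X e)) (@zadj X e) tau /\
    (forall p q, p \in A -> connect (np2 (@zadj X e) (@zadj X e)) p q -> q \in A) /\
    (forall x y : X,
       (forall (hx : x != e) (hy : y != e),
          ((exist _ x hx, exist _ y hy) \in A ->
             mu (x, y) = val (tau (exist _ x hx, exist _ y hy))) /\
          ((exist _ x hx, exist _ y hy) \notin A -> mu (x, y) = e)) /\
       (y = e -> mu (x, y) = x) /\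
       (x = e -> mu (x, y) = y)).
Proof.
move=> Hmu irr; have iso := Hspace_unit_isolated Hmu irr.
split.
  apply/setP => y; rewrite !inE; apply/idP/eqP => [|->]; last exact: connect0.
  exact: isolated_connect.
pose m (p : Zt e * Zt e) := mu (val p.1, val p.2).
have m_cont : dcontinuous (np2 (@zadj X e) (@zadj X e)) (@dadj X) m.
  by move=> p q /andP [p1 p2]; case: Hmu => mu_cont _; apply: mu_cont; apply/andP.
have m_fiber := isolated_fiber_closed iso m_cont.
exists (fun p => insubd p.1 (m p)), [set p | m p != e]; split.
  move=> p q pq; rewrite /zadj !val_insubd (m_fiber _ _ pq).
  by case: eqP => _; [case/andP: pq | apply: m_cont].
split.
  move=> p q pA /(closed_connect (a := [set p | m p != e])) <- //.
  by move=> a b ab; rewrite !inE (m_fiber _ _ ab).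
move=> x y; split; last by split=> ->; [apply: Hspace_unitr | apply: Hspace_unitl].
by move=> hx hy; rewrite inE /m /=; split=> [nz|/negPn/eqP //]; rewrite val_insubd nz.
Qed.
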